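(* Fix $n$ and let $\mathbf{A}\mathbf{x}=\mathbf{b}$ be the linear system described in the context, and let $\mathbf{x}^{RSD}$ be the vector representing random serial dictatorship (so $\mathbf{A}\mathbf{x}^{RSD}=\mathbf{b}$). Let $\mathbf{y}\neq\mathbf{x}^{RSD}$ be any solution of $\mathbf{A}\mathbf{x}=\mathbf{b}$. Then there exists $\lambda>0$ such that $\lambda\mathbf{y}+(1-\lambda)\mathbf{x}^{RSD}$ represents an assignment rule (i.e. all entries are nonnegative, so each $f(R)$ is bistochastic) which satisfies equal treatment of equals, support efficiency and localizedness, and which differs from RSD.
   Context: Let $N$ be a set of $n$ agents and $H$ a set of $n$ houses. A preference profile $R$ assigns to each agent a strict linear order $\succ_i$ over $H$; $\mathcal{R}$ is the set of all $n!^n$ profiles. An assignment rule $f$ maps each profile to a bistochastic $n\times n$ matrix; $f(R,i,h)$ is the probability that agent $i$ gets house $h$. Such a rule is identified with the vector $\mathbf{x}\in\mathbb{R}^{n^2n!^n}$ with $\mathbf{x}_{(R,i,h)}=f(R,i,h)$. For a priority order $\pi$ of the agents, serial dictatorship $SD_\pi$ lets agents in order $\pi$ successively take their most preferred remaining house, and $RSD(R)=\frac1{n!}\sum_\pi SD_\pi(R)$. Properties: support efficiency: $RSD(R,i,h)=0\Rightarrow f(R,i,h)=0$; localizedness: whenever $R'$ arises from $R$ by agent $i$ swapping two houses $h_k,h_l$ that are adjacent in $\succ_i$ (all other agents unchanged), $f(R,i,h)=f(R',i,h)$ for all $h\notin\{h_k,h_l\}$; equal treatment of equals: $\succ_i=\succ_j$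 implies $f(R,i,h)=f(R,j,h)$ for all $h$. The system $\mathbf{A}\mathbf{x}=\mathbf{b}$ (with unknown $\mathbf{x}\in\mathbb{R}^{n^2n!^n}$ indexed by triples $(R,i,h)$) consists exactly of the following equations: (1) $\sum_{h\in H}\mathbf{x}_{(R,i,h)}=1$ for every $R,i$, and $\sum_{i\in N}\mathbf{x}_{(R,i,h)}=1$ for every $R,h$; (2) $\mathbf{x}_{(R,i,h)}=0$ for every $(R,i,h)$ with $RSD(R,i,h)=0$; (3) $\mathbf{x}_{(R,i,h)}-\mathbf{x}_{(R',i,h)}=0$ for every $R$, $i$, every profile $R'$ obtained from $R$ by agent $i$ swapping two adjacent houses in her ranking, and every house $h$ not among the two swapped houses; (4) $\mathbf{x}_{(R,i,h)}-\mathbf{x}_{(R,j,h)}=0$ for every $R$, $h$ and agents $i\neq j$ with $\succ_i=\succ_j$. *)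

From HB Require Import structures.
From mathcomp Require Import all_boot all_order all_algebra all_fingroup.
Set Implicit Arguments. Unset Strict Implicit. Unset Printing Implicit Defensive.
Import Order.TTheory GRing.Theory Num.Theory.
Local Open Scope ring_scope.

(* Agents and houses are both 'I_n.  A strict preference of an agent is a
   ranking sigma : {perm 'I_n}; sigma k is the house ranked at position k
   (position 0 = most preferred). *)
Definition profile (n : nat) := {ffun 'I_n -> {perm 'I_n}}.

(* An assignment-rule vector: x R i h = probability agent i gets house h. *)
Definition rvec (F : Type) (n : nat) := profile n -> 'I_n -> 'I_n -> F.

(* Most preferred house of ranking sigma not in [taken] (d = unused default). *)
Definition pick_best n (sigma : {perm 'I_n}) (taken : {set 'I_n}) (d : 'I_n) : 'I_n :=
  head d [seq h <- [seq sigma k | k <- enum 'I_n] | h \notin taken].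

Fixpoint sd_run n (R : profile n) (ag : seq 'I_n) (taken : {set 'I_n})
  (acc : {ffun 'I_n -> 'I_n}) : {ffun 'I_n -> 'I_n} :=
  match ag with
  | [::] => acc
  | i :: ag' =>
      let h := pick_best (R i) taken i in
      sd_run R ag' (h |: taken) [ffun j => if j == i then h else acc j]
  end.

(* Serial dictatorship with priority pi (pi k = agent at priority position k):
   SD pi R i = house obtained by agent i. *)
Definition SD n (pi : {perm 'I_n}) (R : profile n) : {ffun 'I_n -> 'I_n} :=
  sd_run R [seq pi k | k <- enum 'I_n] set0 [ffun j => j].

Definition RSD (F : numFieldType) n : rvec F n :=
  fun R i h => (n`!%:R)^-1 * \sum_(pi : {perm 'I_n}) ((SD pi R i == h)%:R : F).

Definition swap_prof n (R : profile n) (i p q : 'I_n) : profile n :=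
  [ffun j => if j == i then (tperm p q * R i)%g else R j].

Definition bistoch (F : numFieldType) n (x : rvec F n) : Prop :=
  (forall (R : profile n) (i : 'I_n), \sum_(h < n) x R i h = 1) /\ (forall (R : profile n) (h : 'I_n), \sum_(i < n) x R i h = 1).

(* The system A x = b, equations (1)-(4). *)
Definition solves_system (F : numFieldType) n (x : rvec F n) : Prop :=
  [/\ bistoch x,
      (forall (R : profile n) (i h : 'I_n), @RSD F n R i h = 0 -> x R i h = 0),
      (forall (R : profile n) (i p q : 'I_n), val q = (val p).+1 ->
         forall h, h != R i p -> h != R i q -> x R i h = x (swap_prof R i p q) i h)
    & (forall (R : profile n) (i j h : 'I_n), i != j -> R i = R j -> x R i h = x R j h)].

Definition is_rule (F : numFieldType) n (x : rvec F n) : Prop :=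
  (forall (R : profile n) (i h : 'I_n), 0 <= x R i h) /\ bistoch x.

Definition support_efficient (F : numFieldType) n (x : rvec F n) : Prop :=
  forall (R : profile n) (i h : 'I_n), @RSD F n R i h = 0 -> x R i h = 0.

Definition localized (F : numFieldType) n (x : rvec F n) : Prop :=
  forall (R : profile n) (i p q : 'I_n), val q = (val p).+1 ->
    forall h, h != R i p -> h != R i q -> x R i h = x (swap_prof R i p q) i h.

Definition equal_treatment (F : numFieldType) n (x : rvec F n) : Prop :=
  forall (R : profile n) (i j h : 'I_n), R i = R j -> x R i h = x R j h.

From HB Require Import structures.
From mathcomp Require Import all_boot all_order all_algebra all_fingroup.
From mathcomp Require Import zify lra.
From Stdlib Require Import FunctionalExtensionality.
Import Order.TTheory GRing.Theory Num.Theory.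
Set Implicit Arguments. Unset Strict Implicit. Unset Printing Implicit Defensive.
Local Open Scope ring_scope.

(* RSD is an average of n! serial dictatorships, each a permutation matrix, so
   it is bistochastic and each of its nonzero entries is at least 1/n!.  Equal
   treatment holds because exchanging two agents with the same ranking in the
   priority order exchanges their houses, and localizedness because the house
   an agent takes under SD is the first free one in her ranking, which an
   adjacent swap not involving it cannot change.  A solution y of the system
   vanishes wherever RSD does, so the step lam = (1/n!) / (1 + sum |y - RSD|)
   from RSD towards y keeps all entries nonnegative; all other constraints are
   affine, hence preserved, and the result differs from RSD since y does. *)

Lemma head_filter (T : Type) (P : pred T) (s : seq T) d :
  head d (filter P s) = nth d s (find P s).
Proof. by elim: s => //= x s IH; case: (P x). Qed.

Section PickBest.
Variable n : nat.
Implicit Types (sigma : {perm 'I_n}) (T : {set 'I_n}) (d h k : 'I_n).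

Lemma card_ltP T : reflect (exists h, h \notin T) (#|T| < n)%N.
Proof.
rewrite -[n in (_ < n)%N]card_ord -cardsT -(andTb (_ < _)%N) -(subsetT T) -properEcard.
apply: (iffP idP) => [/properP[_ [h _ hT]]|[h hT]]; first by exists h.
by apply/properP; split => //; exists h.
Qed.

Definition first_free sigma T k :=
  sigma k \notin T /\ forall k' : 'I_n, (k' < k)%N -> sigma k' \in T.

Lemma first_free_uniq sigma T k k' :
  first_free sigma T k -> first_free sigma T k' -> k = k'.
Proof.
move=> [kT k_first] [k'T k'_first]; apply: val_inj.
by case: (ltngtP k k') => [/k'_first|/k_first|//]; rewrite ?(negbTE kT) ?(negbTE k'T).
Qed.

Lemma pick_best_spec sigma T d : (#|T| < n)%N ->
  exists2 k, pick_best sigma T d = sigma k & first_free sigma T k.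
Proof.
case/card_ltP => h hT; rewrite /pick_best.
set s := [seq sigma k | k <- enum 'I_n].
have nth_s k : nth d s k = sigma k.
  by rewrite /s (nth_map k) ?size_enum_ord // nth_ord_enum.
have has_free : has (fun h => h \notin T) s.
  by apply/hasP; exists h => //; rewrite -[h](permKV sigma) map_f ?mem_enum.
have := has_free; rewrite has_find /s size_map size_enum_ord => k_lt.
exists (Ordinal k_lt); first by rewrite head_filter -nth_s.
split; first by rewrite -nth_s (nth_find d has_free).
by move=> k' /(before_find d); rewrite nth_s => /negbFE.
Qed.

Lemma pick_best_notin sigma T d : (#|T| < n)%N -> pick_best sigma T d \notin T.
Proof. by case/(pick_best_spec sigma d) => k -> []. Qed.

Lemma pick_best_first_free sigma T d k :
  first_free sigma T k -> pick_best sigma T d = sigma k.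
Proof.
move=> k_free; have [|k' -> k'_free] := pick_best_spec sigma d (T := T).
  by apply/card_ltP; exists (sigma k); case: k_free.
by rewrite (first_free_uniq k'_free k_free).
Qed.

Lemma pick_best_default sigma T d d' : (#|T| < n)%N ->
  pick_best sigma T d = pick_best sigma T d'.
Proof.
by case/(pick_best_spec sigma d) => k -> /(pick_best_first_free d').
Qed.

Lemma first_free_tperm sigma T (p q : 'I_n) k : val q = (val p).+1 ->
  k != p -> k != q -> first_free sigma T k -> first_free (tperm p q * sigma) T k.
Proof.
move=> pq kp kq [kT k_first]; split; first by rewrite permM tpermD // eq_sym.
(* [p] and [q] are adjacent, so both lie on the same side of [k]. *)
move=> k' lt_k'k; rewrite permM; apply: k_first.
have kq' : val k != val q by [].
by move: kq' kp lt_k'k pq; case: tpermP => [->|->|//] /=; lia.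
Qed.

Lemma pick_best_tperm sigma T d d' (p q : 'I_n) h : val q = (val p).+1 ->
  (#|T| < n)%N -> h != sigma p -> h != sigma q ->
  (pick_best sigma T d == h) = (pick_best (tperm p q * sigma) T d' == h).
Proof.
move=> pq T_small.
suff tperm_fix sigma' d1 d2 : h != sigma' p -> h != sigma' q ->
    pick_best sigma' T d1 = h -> pick_best (tperm p q * sigma') T d2 = h.
  move=> hp hq; apply/eqP/eqP => [|pick_h]; first exact: tperm_fix.
  rewrite -[sigma in pick_best sigma]mul1g -(tperm2 p q) -mulgA.
  by apply: tperm_fix pick_h; rewrite permM ?tpermL ?tpermR.
move=> hp hq; have [k -> k_free] := pick_best_spec sigma' d1 T_small.
move=> k_h; rewrite -k_h in hp hq *.
have kp : k != p by apply: contra_neq hp => ->.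
have kq : k != q by apply: contra_neq hq => ->.
by rewrite (pick_best_first_free d2 (first_free_tperm pq kp kq k_free)) permM tpermD // eq_sym.
Qed.
End PickBest.

Section SerialDictatorship.
Variable n : nat.
Implicit Types (R : profile n) (pi : {perm 'I_n}) (ag : seq 'I_n) (T : {set 'I_n})
  (acc : {ffun 'I_n -> 'I_n}).

Lemma sd_run_notin R ag T acc j : j \notin ag -> sd_run R ag T acc j = acc j.
Proof.
elim: ag T acc => //= a ag IH T acc; rewrite in_cons negb_or => /andP[ja jag].
by rewrite IH // ffunE (negbTE ja).
Qed.

Lemma card_lt_cons T ag : (#|T| + (size ag).+1 <= n)%N -> (#|T| < n)%N.
Proof. by apply: leq_trans; rewrite addnS ltnS leq_addr. Qed.

Lemma card_setU1_cons T h ag : (#|T| + (size ag).+1 <= n)%N ->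
  (#|h |: T| + size ag <= n)%N.
Proof.
by apply: leq_trans; rewrite cardsU1 addnS -addSn leq_add2r; case: (h \notin T).
Qed.

Lemma sd_run_inj R ag T acc : uniq ag -> (#|T| + size ag <= n)%N ->
  {in [predC ag] &, injective acc} -> {in [predC ag], forall j, acc j \in T} ->
  injective (sd_run R ag T acc).
Proof.
elim: ag T acc => [|a ag IH] T acc /=; first by move=> _ _ acc_inj _ j j'; apply: acc_inj.
case/andP=> a_ag ag_uniq T_small acc_inj acc_T.
have := pick_best_notin (R a) a (card_lt_cons T_small).
set h := pick_best (R a) T a => h_T.
have acc_notin_h j : j != a -> j \notin ag -> acc j != h.
  move=> ja j_ag; apply: contraNneq _ h_T => <-.
  by rewrite acc_T // !inE negb_or ja.
apply: IH => //.
- exact: card_setU1_cons.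
- move=> j j'; rewrite !inE !ffunE.
  case: eqP => [->|/eqP ja]; case: eqP => [->|/eqP j'a] // j_ag j'_ag.
  + by move/esym/eqP; rewrite (negbTE (acc_notin_h _ j'a j'_ag)).
  + by move/eqP; rewrite (negbTE (acc_notin_h _ ja j_ag)).
  + by apply: acc_inj; rewrite !inE negb_or ?ja ?j'a.
- move=> j; rewrite inE ffunE => j_ag; case: eqP => [_|/eqP ja]; first exact: setU11.
  by rewrite setU1r // acc_T // !inE negb_or ja.
Qed.

Lemma mem_priority pi j : j \in [seq pi k | k <- enum 'I_n].
Proof. by rewrite -[j](permKV pi) map_f ?mem_enum. Qed.

Lemma priority_uniq pi : uniq [seq pi k | k <- enum 'I_n].
Proof. by rewrite map_inj_uniq ?enum_uniq //; exact: perm_inj. Qed.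

Lemma size_priority pi : size [seq pi k | k <- enum 'I_n] = n.
Proof. by rewrite size_map size_enum_ord. Qed.

Lemma SD_inj pi R : injective (SD pi R).
Proof.
apply: sd_run_inj; rewrite ?priority_uniq ?cards0 ?size_priority //.
- by move=> j j'; rewrite inE mem_priority.
- by move=> j; rewrite inE mem_priority.
Qed.

Lemma sd_run_tperm R (i j : 'I_n) ag T acc acc' : R i = R j ->
  (#|T| + size ag <= n)%N ->
  {in [predC ag], forall x, acc' (tperm i j x) = acc x} ->
  forall x, sd_run R (map (tperm i j) ag) T acc' x = sd_run R ag T acc (tperm i j x).
Proof.
move=> Rij; elim: ag T acc acc' => [|a ag IH] T acc acc' /= T_small acc'E x.
  by rewrite -acc'E ?tpermK.
have R_tperm : R (tperm i j a) = R a by case: tpermP => // ->.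
rewrite R_tperm (pick_best_default _ _ a (card_lt_cons T_small)).
apply: IH => [|y]; first exact: card_setU1_cons.
rewrite inE !ffunE (inj_eq perm_inj) => y_ag.
by case: eqP => // /eqP ya; rewrite acc'E // !inE negb_or ya.
Qed.

Lemma SD_tperm pi R (i j : 'I_n) : R i = R j ->
  SD (pi * tperm i j)%g R i = SD pi R j.
Proof.
move=> Rij; rewrite /SD.
have -> : [seq (pi * tperm i j)%g k | k <- enum 'I_n] =
          map (tperm i j) [seq pi k | k <- enum 'I_n].
  by elim: (enum 'I_n) => //= k s ->; rewrite permM.
rewrite (sd_run_tperm _ _ (acc := [ffun x => x])) ?tpermL ?cards0 ?size_priority //.
by move=> x; rewrite inE mem_priority.
Qed.

Lemma sd_run_local R R' (i : 'I_n) ag T acc :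
  (forall j, j != i -> R j = R' j) -> uniq ag -> i \in ag -> (#|T| + size ag <= n)%N ->
  exists2 T' : {set 'I_n}, (#|T'| < n)%N &
    sd_run R ag T acc i = pick_best (R i) T' i /\
    sd_run R' ag T acc i = pick_best (R' i) T' i.
Proof.
move=> RR'; elim: ag T acc => [|a ag IH] T acc //= /andP[a_ag ag_uniq].
rewrite in_cons => /predU1P[ia|i_ag] T_small.
  subst a; exists T; first exact: card_lt_cons T_small.
  by split; rewrite sd_run_notin // ffunE eqxx.
have ai : a != i by apply: contraNneq a_ag => ->.
by rewrite -(RR' a ai); apply: IH => //; exact: card_setU1_cons.
Qed.

Lemma SD_local pi R R' (i : 'I_n) : (forall j, j != i -> R j = R' j) ->
  exists2 T : {set 'I_n}, (#|T| < n)%N &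
    SD pi R i = pick_best (R i) T i /\ SD pi R' i = pick_best (R' i) T i.
Proof.
move=> RR'; apply: sd_run_local; rewrite ?priority_uniq ?mem_priority //.
by rewrite cards0 size_priority.
Qed.
End SerialDictatorship.

Lemma sum_eq_natr_inj {F : pzSemiRingType} (T : finType) (f : T -> T) y :
  injective f -> \sum_x ((f x == y)%:R : F) = 1.
Proof.
move=> f_inj; have [g fK gK] := injF_bij f_inj.
rewrite (bigD1 (g y)) //= gK eqxx big1 ?addr0 // => x /negbTE x_gy.
by rewrite -[y in f x == y]gK (inj_eq f_inj) x_gy.
Qed.

Lemma sum_eq_natr {F : pzSemiRingType} (T : finType) (a : T) :
  \sum_x ((a == x)%:R : F) = 1.
Proof.
under eq_bigr do rewrite eq_sym.
exact: sum_eq_natr_inj a (@inj_id T).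
Qed.

Section RandomSerialDictatorship.
Variables (F : realFieldType) (n : nat).
Local Notation RSD := (@RSD F n).

Lemma RSD_ge_inv_fact (R : profile n) (i h : 'I_n) :
  RSD R i h != 0 -> (n`!%:R : F)^-1 <= RSD R i h.
Proof.
rewrite /RSD -natr_sum; case: (\sum_pi _)%N => [|m _]; first by rewrite mulr0 eqxx.
by rewrite ler_peMr ?invr_ge0 ?ler1n.
Qed.

Lemma RSD_bistoch : bistoch RSD.
Proof.
have fact_neq0 : (n`!%:R : F) != 0 by rewrite pnatr_eq0 -lt0n fact_gt0.
split=> R x; rewrite /RSD -mulr_sumr exchange_big /=.
  under eq_bigr do rewrite sum_eq_natr.
  by rewrite sumr_const card_Sn mulVf.
under eq_bigr => pi _ do rewrite (sum_eq_natr_inj x (@SD_inj n pi R)).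
by rewrite sumr_const card_Sn mulVf.
Qed.

Lemma RSD_equal_treatment : equal_treatment RSD.
Proof.
move=> R i j h Rij; rewrite /RSD (reindex_inj (mulIg (tperm i j))) /=.
by under eq_bigr do rewrite SD_tperm //.
Qed.

Lemma RSD_localized : localized RSD.
Proof.
move=> R i p q pq h hp hq; rewrite /RSD; congr (_ * _); apply: eq_bigr => pi _.
have R_swap j : j != i -> R j = swap_prof R i p q j by rewrite ffunE => /negbTE ->.
have [T T_small [-> ->]] := SD_local pi R_swap.
by rewrite ffunE eqxx (pick_best_tperm i i pq T_small hp hq).
Qed.
End RandomSerialDictatorship.

Lemma small_step_ge0 (F : realFieldType) (I : finType) (x y : I -> F) (c : F) :
  0 < c -> (forall i, x i != 0 -> c <= x i) -> (forall i, x i = 0 -> y i = 0) ->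
  exists2 lam : F, 0 < lam & forall i, 0 <= lam * y i + (1 - lam) * x i.
Proof.
move=> c_gt0 x_ge_c y_supp.
set S := \sum_i `|y i - x i|.
have S_ge0 : 0 <= S by apply: sumr_ge0 => i _.
have dist_le_S i : `|y i - x i| <= S.
  by rewrite /S (bigD1 i) //= lerDl sumr_ge0.
have S1_gt0 : 0 < 1 + S by rewrite ltr_wpDr.
set lam := c / (1 + S).
have lam_gt0 : 0 < lam by rewrite divr_gt0.
have lamS_le_c : lam * S <= c.
  by rewrite mulrAC ler_pdivrMr // ler_pM2l // lerDr.
exists lam => // i; have [x0|x_neq0] := eqVneq (x i) 0.
  by rewrite x0 y_supp // !mulr0 addr0.
have := x_ge_c i x_neq0; have := dist_le_S i; rewrite ler_norml => /andP[y_ge _].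
have : 0 <= lam * (y i - x i + S) by apply: mulr_ge0; lra.
lra.
Qed.

Section Mix.
Variables (F : realFieldType) (n : nat) (lam : F).
Implicit Types x y : rvec F n.

Definition mix y x : rvec F n := fun R i h => lam * y R i h + (1 - lam) * x R i h.

Lemma bistoch_mix y x : bistoch y -> bistoch x -> bistoch (mix y x).
Proof.
move=> [y_row y_col] [x_row x_col].
split=> R k; rewrite big_split /= -!mulr_sumr.
  by rewrite y_row x_row !mulr1 addrC subrK.
by rewrite y_col x_col !mulr1 addrC subrK.
Qed.

Lemma support_efficient_mix y x :
  support_efficient y -> support_efficient x -> support_efficient (mix y x).
Proof. by move=> y_supp x_supp R i h RSD0; rewrite /mix y_supp ?x_supp // !mulr0 addr0. Qed.

Lemma equal_treatment_mix y x :
  equal_treatment y -> equal_treatment x -> equal_treatment (mix y x).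
Proof. by move=> y_eqt x_eqt R i j h Rij; rewrite /mix (y_eqt _ _ j) // (x_eqt _ _ j). Qed.

Lemma localized_mix y x : localized y -> localized x -> localized (mix y x).
Proof.
move=> y_loc x_loc R i p q pq h hp hq.
by rewrite /mix (y_loc _ _ _ _ pq) // (x_loc _ _ _ _ pq).
Qed.

Lemma mix_eq_right y x : lam != 0 -> mix y x = x -> y = x.
Proof.
move=> lam_neq0 mix_x; apply: functional_extensionality => R.
apply: functional_extensionality => i; apply: functional_extensionality => h.
have : lam * (y R i h - x R i h) = 0.
  by have := congr1 (fun z => z R i h) mix_x; rewrite /mix; lra.
by move/eqP; rewrite mulf_eq0 (negbTE lam_neq0) subr_eq0 => /eqP.
Qed.
End Mix.

Lemma equal_treatment_of_distinct (F : numFieldType) n (x : rvec F n) :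
  (forall (R : profile n) (i j h : 'I_n), i != j -> R i = R j -> x R i h = x R j h) ->
  equal_treatment x.
Proof. by move=> x_eqt R i j h; have [-> _ | ij] := eqVneq i j; last exact: x_eqt. Qed.

Theorem mainTheorem3 (F : realFieldType) (n : nat) (y : rvec F n) :
  solves_system y -> y <> @RSD F n ->
  exists2 lam : F, 0 < lam &
    let z : rvec F n := fun R i h => lam * y R i h + (1 - lam) * @RSD F n R i h in
    [/\ is_rule z, equal_treatment z, support_efficient z, localized z
      & z <> @RSD F n].
Proof.
move=> [y_bistoch y_supp y_loc y_eqt] y_neq.
have inv_fact_gt0 : 0 < (n`!%:R : F)^-1 by rewrite invr_gt0 ltr0n fact_gt0.
have [lam lam_gt0 z_ge0] := small_step_ge0 (x := fun t => @RSD F n t.1.1 t.1.2 t.2)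
  (y := fun t => y t.1.1 t.1.2 t.2) inv_fact_gt0 (fun t => @RSD_ge_inv_fact F n _ _ _)
  (fun t => y_supp t.1.1 t.1.2 t.2).
exists lam => //; split.
- by split=> [R i h|]; [exact: z_ge0 (R, i, h) | exact: bistoch_mix (RSD_bistoch F n)].
- exact: equal_treatment_mix (equal_treatment_of_distinct y_eqt) (@RSD_equal_treatment F n).
- exact: support_efficient_mix y_supp (fun _ _ _ => id).
- exact: localized_mix y_loc (@RSD_localized F n).
- by move/(mix_eq_right (lt0r_neq0 lam_gt0)).
Qed.
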